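(* Let $(X,d)$ be a path-connected metric space, $x_0\in X$, $n\geq 1$. The map $\pi:\Omega^n(X,x_0)\to\pi_n(X,x_0)$, $\pi(\alpha)=[\alpha]$, is continuous when $\pi_n(X,x_0)$ carries the topology induced by $\rho$. Consequently, the quotient topology and the $\tau$-topology on $\pi_n(X,x_0)$ are each at least as fine as the topology induced by $\rho$.
   Context: $\Omega^n(X,x_0)$ is the set of continuous maps $\alpha:[0,1]^n\to X$ with $\alpha(\partial[0,1]^n)=\{x_0\}$, with uniform metric $\mu(\alpha,\beta)=\sup_t d(\alpha(t),\beta(t))$ (equivalently the compact-open topology). $\rho(a,b)=\inf\{\mu(\alpha,\beta)\mid\alpha\in a,\beta\in b\}$ is a pseudometric on $\pi_n(X,x_0)$. The quotient topology on $\pi_n(X,x_0)$ is the finest topology making $\pi$ continuous. The $\tau$-topology is the finest group topology on $\pi_n(X,x_0)$ making $\pi$ continuous (equivalently, the finest group topology coarser than the quotient topology). *)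

From Stdlib Require Import Reals.
From Coquelicot Require Import Coquelicot.
Open Scope R_scope.

Definition is_metric {X : Type} (d : X -> X -> R) : Prop :=
  (forall x y, 0 <= d x y) /\
  (forall x y, d x y = 0 <-> x = y) /\
  (forall x y, d x y = d y x) /\
  (forall x y z, d x z <= d x y + d y z).

Definition path_connected {X : Type} (d : X -> X -> R) : Prop :=
  forall x y : X, exists p : R -> X,
    p 0 = x /\ p 1 = y /\
    (forall s, 0 <= s <= 1 -> forall eps, 0 < eps -> exists del, 0 < del /\
       forall s', 0 <= s' <= 1 -> Rabs (s' - s) < del -> d (p s') (p s) < eps).

(** The cube [0,1]^n: points t : nat -> R with t i in [0,1] for i < n and
    t i = 0 for i >= n (so that each point has a unique representative). *)
Definition cube (n : nat) : Type :=
  {t : nat -> R | forall i, ((i < n)%nat -> 0 <= t i <= 1) /\ ((n <= i)%nat -> t i = 0)}.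

Definition cpt {n : nat} (t : cube n) : nat -> R := proj1_sig t.

Definition on_boundary {n : nat} (t : cube n) : Prop :=
  exists i, (i < n)%nat /\ (cpt t i = 0 \/ cpt t i = 1).

Definition cube_continuous {X : Type} (d : X -> X -> R) {n : nat} (f : cube n -> X) : Prop :=
  forall (t : cube n) eps, 0 < eps -> exists del, 0 < del /\
    forall s : cube n, (forall i, (i < n)%nat -> Rabs (cpt s i - cpt t i) < del) ->
      d (f s) (f t) < eps.

Definition is_loop {X : Type} (d : X -> X -> R) (n : nat) (x0 : X) (f : cube n -> X) : Prop :=
  cube_continuous d f /\ (forall t, on_boundary t -> f t = x0).

Definition Omega {X : Type} (d : X -> X -> R) (n : nat) (x0 : X) : Type :=
  {f : cube n -> X | is_loop d n x0 f}.

Definition oval {X : Type} {d : X -> X -> R} {n : nat} {x0 : X} (a : Omega d n x0) : cube n -> X :=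
  proj1_sig a.

Definition homotopic {X : Type} (d : X -> X -> R) (n : nat) (x0 : X) (a b : Omega d n x0) : Prop :=
  exists H : cube n -> R -> X,
    (forall (t : cube n) s eps, 0 <= s <= 1 -> 0 < eps -> exists del, 0 < del /\
       forall (t' : cube n) s', 0 <= s' <= 1 ->
         (forall i, (i < n)%nat -> Rabs (cpt t' i - cpt t i) < del) ->
         Rabs (s' - s) < del -> d (H t' s') (H t s) < eps) /\
    (forall t, H t 0 = oval a t) /\
    (forall t, H t 1 = oval b t) /\
    (forall t s, 0 <= s <= 1 -> on_boundary t -> H t s = x0).

Definition pin {X : Type} (d : X -> X -> R) (n : nat) (x0 : X) : Type :=
  {A : Omega d n x0 -> Prop | exists a, A = homotopic d n x0 a}.

Definition pmem {X : Type} {d : X -> X -> R} {n : nat} {x0 : X}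
  (A : pin d n x0) (a : Omega d n x0) : Prop := proj1_sig A a.

Definition piproj {X : Type} (d : X -> X -> R) (n : nat) (x0 : X) (a : Omega d n x0) : pin d n x0 :=
  exist _ (homotopic d n x0 a) (ex_intro _ a eq_refl).

Definition mu {X : Type} {d : X -> X -> R} {n : nat} {x0 : X} (a b : Omega d n x0) : Rbar :=
  Lub_Rbar (fun r => exists t : cube n, r = d (oval a t) (oval b t)).

Definition rho {X : Type} {d : X -> X -> R} {n : nat} {x0 : X} (A B : pin d n x0) : Rbar :=
  Glb_Rbar (fun r => exists a b, pmem A a /\ pmem B b /\ mu a b = Finite r).

Definition Omega_open {X : Type} (d : X -> X -> R) (n : nat) (x0 : X)
  (V : Omega d n x0 -> Prop) : Prop :=
  forall a, V a -> exists eps, 0 < eps /\ forall b, Rbar_lt (mu a b) (Finite eps) -> V b.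

Definition rho_open {X : Type} (d : X -> X -> R) (n : nat) (x0 : X)
  (U : pin d n x0 -> Prop) : Prop :=
  forall A, U A -> exists eps, 0 < eps /\ forall B, Rbar_lt (rho A B) (Finite eps) -> U B.

Definition quotient_open {X : Type} (d : X -> X -> R) (n : nat) (x0 : X)
  (U : pin d n x0 -> Prop) : Prop :=
  Omega_open d n x0 (fun a => U (piproj d n x0 a)).

(** Group structure on pi_n (concatenation / reversal in the first coordinate,
    coordinate index 0), stated relationally on representatives. *)
Definition is_concat {X : Type} {n : nat} (f g h : cube n -> X) : Prop :=
  forall t s : cube n, (forall i, i <> 0%nat -> cpt s i = cpt t i) ->
    (cpt t 0 <= 1/2 -> cpt s 0 = 2 * cpt t 0 -> h t = f s) /\
    (1/2 <= cpt t 0 -> cpt s 0 = 2 * cpt t 0 - 1 -> h t = g s).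

Definition is_rev {X : Type} {n : nat} (f h : cube n -> X) : Prop :=
  forall t s : cube n, (forall i, i <> 0%nat -> cpt s i = cpt t i) ->
    cpt s 0 = 1 - cpt t 0 -> h t = f s.

Definition pin_mul {X : Type} {d : X -> X -> R} {n : nat} {x0 : X}
  (A B C : pin d n x0) : Prop :=
  exists a b c, pmem A a /\ pmem B b /\ pmem C c /\ is_concat (oval a) (oval b) (oval c).

Definition pin_inv {X : Type} {d : X -> X -> R} {n : nat} {x0 : X}
  (A C : pin d n x0) : Prop :=
  exists a c, pmem A a /\ pmem C c /\ is_rev (oval a) (oval c).

Definition is_topology {T : Type} (O : (T -> Prop) -> Prop) : Prop :=
  O (fun _ => True) /\ O (fun _ => False) /\
  (forall U V, O U -> O V -> O (fun x => U x /\ V x)) /\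
  (forall S : (T -> Prop) -> Prop, (forall U, S U -> O U) -> O (fun x => exists U, S U /\ U x)).

Definition group_topology {X : Type} (d : X -> X -> R) (n : nat) (x0 : X)
  (O : (pin d n x0 -> Prop) -> Prop) : Prop :=
  is_topology O /\
  (forall A B C, pin_mul A B C -> forall W, O W -> W C ->
     exists U V, O U /\ O V /\ U A /\ V B /\
       forall A' B' C', U A' -> V B' -> pin_mul A' B' C' -> W C') /\
  (forall A C, pin_inv A C -> forall W, O W -> W C ->
     exists U, O U /\ U A /\ forall A' C', U A' -> pin_inv A' C' -> W C').

Inductive generated {T : Type} (F : (T -> Prop) -> Prop) : (T -> Prop) -> Prop :=
| gen_base U : F U -> generated F U
| gen_full : generated F (fun _ => True)
| gen_inter U V : generated F U -> generated F V -> generated F (fun x => U x /\ V x)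
| gen_union (S : (T -> Prop) -> Prop) :
    (forall U, S U -> generated F U) -> generated F (fun x => exists U, S U /\ U x).

(** tau-topology: the finest group topology making pi continuous, i.e. the join
    (topology generated by the union) of all such group topologies. *)
Definition tau_open {X : Type} (d : X -> X -> R) (n : nat) (x0 : X)
  (U : pin d n x0 -> Prop) : Prop :=
  generated (fun V => exists O, group_topology d n x0 O /\
                         (forall W, O W -> quotient_open d n x0 W) /\ O V) U.

(* The projection is 1-Lipschitz from the uniform metric mu to rho, hence continuous;
   the substance is that the rho-topology is a group topology, so that it lies below the
   tau-topology.  Concatenation and reversal of representatives act pointwise, so they do
   not increase uniform distances; this makes multiplication and inversion continuous on
   rho-balls.  The balls are open because rho is even an ultrametric: if a in A is close
   to b in B and b' in B is close to c in C, then a.b^-1.b' in A and b.b^-1.c in C agree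
   on the middle third of the cube and are close on the other two. *)

From Stdlib Require Import Reals Lra Lia ProofIrrelevance FunctionalExtensionality Classical.
From Coquelicot Require Import Coquelicot.
Open Scope R_scope.

Definition clamp01 (v : R) : R := Rmax 0 (Rmin 1 v).

Lemma clamp01_in_unit v : 0 <= clamp01 v <= 1.
Proof. unfold clamp01, Rmax, Rmin; repeat destruct Rle_dec; lra. Qed.

Lemma clamp01_id v : 0 <= v <= 1 -> clamp01 v = v.
Proof. unfold clamp01, Rmax, Rmin; repeat destruct Rle_dec; lra. Qed.

Lemma clamp01_le0 v : v <= 0 -> clamp01 v = 0.
Proof. unfold clamp01, Rmax, Rmin; repeat destruct Rle_dec; lra. Qed.

Lemma clamp01_ge1 v : 1 <= v -> clamp01 v = 1.
Proof. unfold clamp01, Rmax, Rmin; repeat destruct Rle_dec; lra. Qed.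

Lemma clamp01_lipschitz u v : Rabs (clamp01 u - clamp01 v) <= Rabs (u - v).
Proof.
  unfold clamp01, Rmax, Rmin; repeat destruct Rle_dec;
    unfold Rabs; repeat destruct Rcase_abs; lra.
Qed.

Lemma one_le_div x y : 0 < y -> y <= x -> 1 <= x / y.
Proof.
  intros Hy Hxy. replace (x / y) with (1 + (x - y) * / y) by (field; lra).
  pose proof (Rinv_0_lt_compat y Hy); nra.
Qed.

Lemma div_nonpos x y : x <= 0 -> 0 < y -> x / y <= 0.
Proof. intros Hx Hy; unfold Rdiv; pose proof (Rinv_0_lt_compat y Hy); nra. Qed.

Definition square_unif_continuous (h : R -> R -> R) : Prop :=
  forall eps, 0 < eps -> exists del, 0 < del /\
    forall x s x' s', 0 <= x <= 1 -> 0 <= s <= 1 -> 0 <= x' <= 1 -> 0 <= s' <= 1 ->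
      Rabs (x' - x) < del -> Rabs (s' - s) < del -> Rabs (h x' s' - h x s) < eps.

Lemma bilinear_unif_continuous (h : R -> R -> R) :
  (forall x s, h x s = h 0 0 + (h 1 0 - h 0 0) * x + (h 0 1 - h 0 0) * s
                       + (h 1 1 - h 1 0 - h 0 1 + h 0 0) * x * s) ->
  square_unif_continuous h.
Proof.
  set (b := h 1 0 - h 0 0); set (c := h 0 1 - h 0 0);
    set (e := h 1 1 - h 1 0 - h 0 1 + h 0 0); intros Hh eps Heps.
  pose proof (Rabs_pos b); pose proof (Rabs_pos c); pose proof (Rabs_pos e).
  set (K := Rabs b + Rabs c + 2 * Rabs e).
  exists (eps / (K + 1)); split; [apply Rdiv_lt_0_compat; unfold K; lra|].
  intros x s x' s' Hx Hs Hx' Hs' Hdx Hds.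
  assert (Hdel : eps / (K + 1) * (K + 1) = eps) by (field; unfold K; lra).
  assert (Hdiff : h x' s' - h x s
                  = b * (x' - x) + c * (s' - s) + e * (x' * (s' - s) + s * (x' - x)))
    by (rewrite (Hh x' s'), (Hh x s); fold b c e; ring).
  assert (Hmix : Rabs (x' * (s' - s) + s * (x' - x)) <= Rabs (s' - s) + Rabs (x' - x)).
  { eapply Rle_trans; [apply Rabs_triang|].
    rewrite !Rabs_mult, (Rabs_right x'), (Rabs_right s) by lra.
    pose proof (Rabs_pos (s' - s)); pose proof (Rabs_pos (x' - x)); nra. }
  rewrite Hdiff. eapply Rle_lt_trans.
  { eapply Rle_trans; [apply Rabs_triang|]. eapply Rplus_le_compat; [apply Rabs_triang|].
    rewrite Rabs_mult. apply Rmult_le_compat_l; [lra| exact Hmix]. }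
  rewrite !Rabs_mult. set (u := eps / (K + 1)) in *.
  assert (Hu : 0 < u) by (unfold u; apply Rdiv_lt_0_compat; unfold K; lra).
  assert (Hbx : Rabs b * Rabs (x' - x) <= Rabs b * u) by (apply Rmult_le_compat_l; lra).
  assert (Hcs : Rabs c * Rabs (s' - s) <= Rabs c * u) by (apply Rmult_le_compat_l; lra).
  assert (Hes : Rabs e * (Rabs (s' - s) + Rabs (x' - x)) <= Rabs e * (2 * u))
    by (apply Rmult_le_compat_l; lra).
  unfold K in Hdel. lra.
Qed.

Lemma clamp01_unif_continuous h :
  square_unif_continuous h -> square_unif_continuous (fun x s => clamp01 (h x s)).
Proof.
  intros Hh eps Heps. destruct (Hh eps Heps) as [del [Hdel Hh']].
  exists del; split; [exact Hdel|]. intros.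
  eapply Rle_lt_trans; [apply clamp01_lipschitz| auto].
Qed.

Lemma unif_continuous_sign_stable h c x s :
  square_unif_continuous h -> 0 <= x <= 1 -> 0 <= s <= 1 ->
  exists del, 0 < del /\ forall x' s', 0 <= x' <= 1 -> 0 <= s' <= 1 ->
    Rabs (x' - x) < del -> Rabs (s' - s) < del ->
    (h x s < c -> h x' s' < c) /\ (c < h x s -> c < h x' s').
Proof.
  intros Hh Hx Hs. destruct (Req_dec (h x s) c) as [Heq | Hne].
  - exists 1; split; [lra|]. intros; lra.
  - assert (Hgap : 0 < Rabs (h x s - c)) by (apply Rabs_pos_lt; lra).
    destruct (Hh _ Hgap) as [del [Hdel Hclose]]. exists del; split; [exact Hdel|].
    intros x' s' Hx' Hs' Hdx Hds. specialize (Hclose x s x' s' Hx Hs Hx' Hs' Hdx Hds).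
    revert Hclose; unfold Rabs; repeat destruct Rcase_abs; intros; split; intros; lra.
Qed.

Section Loops.

Variable n : nat.
Hypothesis n_pos : (0 < n)%nat.

Definition set_first_fun (t : cube n) (v : R) (i : nat) : R :=
  match i with O => clamp01 v | S k => cpt t (S k) end.

Lemma set_first_fun_spec t v :
  forall i, ((i < n)%nat -> 0 <= set_first_fun t v i <= 1) /\
            ((n <= i)%nat -> set_first_fun t v i = 0).
Proof.
  intros [|k]; simpl.
  - split; [intros; apply clamp01_in_unit | lia].
  - destruct t as [f Hf]; apply Hf.
Qed.

(* The new coordinate is clamped into [0,1], so that a reparametrisation of the
   first coordinate never has to be checked to stay inside the cube. *)
Definition set_first (t : cube n) (v : R) : cube n :=
  exist _ (set_first_fun t v) (set_first_fun_spec t v).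

Lemma cube_ext (t t' : cube n) : (forall i, cpt t i = cpt t' i) -> t = t'.
Proof.
  destruct t as [f Hf], t' as [g Hg]; unfold cpt; simpl; intros H.
  assert (f = g) by (apply functional_extensionality; auto). subst.
  f_equal. apply proof_irrelevance.
Qed.

Lemma cpt_in_unit (t : cube n) i : (i < n)%nat -> 0 <= cpt t i <= 1.
Proof. destruct t as [f Hf]; unfold cpt; simpl; intros; apply Hf; auto. Qed.

Lemma cpt_first_in_unit (t : cube n) : 0 <= cpt t 0 <= 1.
Proof. apply cpt_in_unit, n_pos. Qed.

Lemma cpt_set_first0 t v : cpt (set_first t v) 0 = clamp01 v.
Proof. reflexivity. Qed.

Lemma cpt_set_first_off t v i : i <> 0%nat -> cpt (set_first t v) i = cpt t i.
Proof. destruct i; [congruence | reflexivity]. Qed.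

Lemma cpt_set_first_in_unit t v : 0 <= v <= 1 -> cpt (set_first t v) 0 = v.
Proof. apply clamp01_id. Qed.

Lemma set_first_cpt t : set_first t (cpt t 0) = t.
Proof. apply cube_ext; intros [|k]; [apply clamp01_id, cpt_first_in_unit | reflexivity]. Qed.

Lemma set_first_set_first t v w : set_first (set_first t v) w = set_first t w.
Proof. apply cube_ext; intros [|k]; reflexivity. Qed.

Lemma set_first_le0 t v : v <= 0 -> set_first t v = set_first t 0.
Proof.
  intros; apply cube_ext; intros [|k]; [simpl; rewrite !clamp01_le0; lra | reflexivity].
Qed.

Lemma set_first_ge1 t v : 1 <= v -> set_first t v = set_first t 1.
Proof.
  intros; apply cube_ext; intros [|k]; [simpl; rewrite !clamp01_ge1; lra | reflexivity].
Qed.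

Lemma on_boundary_set_first0 t : on_boundary (set_first t 0).
Proof. exists 0%nat; split; [exact n_pos | left; apply clamp01_le0; lra]. Qed.

Lemma on_boundary_set_first1 t : on_boundary (set_first t 1).
Proof. exists 0%nat; split; [exact n_pos | right; apply clamp01_ge1; lra]. Qed.

Definition side_face (t : cube n) : Prop :=
  exists i, (0 < i < n)%nat /\ (cpt t i = 0 \/ cpt t i = 1).

Lemma side_face_set_first t v : side_face t -> side_face (set_first t v).
Proof. intros [[|k] [Hi Hc]]; [lia | exists (S k); split; auto]. Qed.

Lemma side_face_on_boundary t : side_face t -> on_boundary t.
Proof. intros [i [Hi Hc]]; exists i; split; [lia | exact Hc]. Qed.

Lemma on_boundary_cases t : on_boundary t -> cpt t 0 = 0 \/ cpt t 0 = 1 \/ side_face t.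
Proof.
  intros [[|k] [Hi Hc]]; [destruct Hc; auto|].
  right; right; exists (S k); split; [lia | exact Hc].
Qed.

Definition cube_origin : cube n.
Proof. refine (exist _ (fun _ => 0) _). intros i; split; intros; lra. Defined.


Variables (X : Type) (d : X -> X -> R) (x0 : X).

Definition jointly_continuous (F : cube n -> R -> X) : Prop :=
  forall (t : cube n) s eps, 0 <= s <= 1 -> 0 < eps -> exists del, 0 < del /\
    forall (t' : cube n) s', 0 <= s' <= 1 ->
      (forall i, (i < n)%nat -> Rabs (cpt t' i - cpt t i) < del) ->
      Rabs (s' - s) < del -> d (F t' s') (F t s) < eps.

Definition fixes_boundary (F : cube n -> R -> X) : Prop :=
  forall t s, 0 <= s <= 1 -> on_boundary t -> F t s = x0.

Definition fixes_side_faces (F : cube n -> R -> X) : Prop :=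
  forall t s, 0 <= s <= 1 -> side_face t -> F t s = x0.

(* [homotopic d n x0 a b] unfolds to [homotopic_fun (oval a) (oval b)]. *)
Definition homotopic_fun (f g : cube n -> X) : Prop :=
  exists H, jointly_continuous H /\ (forall t, H t 0 = f t) /\ (forall t, H t 1 = g t) /\
    fixes_boundary H.

Definition const_htpy (f : cube n -> X) : cube n -> R -> X := fun t _ => f t.

Definition const_loop : cube n -> X := fun _ => x0.

Lemma fixes_boundary_side_faces F : fixes_boundary F -> fixes_side_faces F.
Proof. intros HF t s Hs Ht; apply HF, side_face_on_boundary; assumption. Qed.

Lemma loop_const_htpy f :
  is_loop d n x0 f -> jointly_continuous (const_htpy f) /\ fixes_boundary (const_htpy f).
Proof.
  intros [Hc Hb]; split.
  - intros t s eps _ Heps; destruct (Hc t eps Heps) as [del [Hdel Hclose]].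
    exists del; split; [exact Hdel|]. intros; apply Hclose; assumption.
  - intros t s _ Ht; apply Hb, Ht.
Qed.

Lemma loop_of_htpy F s :
  jointly_continuous F -> fixes_boundary F -> 0 <= s <= 1 -> is_loop d n x0 (fun t => F t s).
Proof.
  intros HF HB Hs; split.
  - intros t eps Heps; destruct (HF t s eps Hs Heps) as [del [Hdel Hclose]].
    exists del; split; [exact Hdel|]. intros t' Ht'; apply Hclose; [exact Hs | exact Ht'|].
    rewrite Rminus_diag, Rabs_R0; exact Hdel.
  - intros t Ht; apply HB; assumption.
Qed.

Lemma loop_set_first_le0 f t v : is_loop d n x0 f -> v <= 0 -> f (set_first t v) = x0.
Proof. intros [_ Hf] Hv; rewrite set_first_le0 by exact Hv; apply Hf, on_boundary_set_first0. Qed.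

Lemma loop_set_first_ge1 f t v : is_loop d n x0 f -> 1 <= v -> f (set_first t v) = x0.
Proof. intros [_ Hf] Hv; rewrite set_first_ge1 by exact Hv; apply Hf, on_boundary_set_first1. Qed.

Lemma loop_side_face f t v : is_loop d n x0 f -> side_face t -> f (set_first t v) = x0.
Proof. intros [_ Hf] Ht; apply Hf, side_face_on_boundary, side_face_set_first, Ht. Qed.

Lemma jointly_continuous_reparam G phi psi :
  jointly_continuous G -> square_unif_continuous phi -> square_unif_continuous psi ->
  (forall x s, 0 <= x <= 1 -> 0 <= s <= 1 -> 0 <= psi x s <= 1) ->
  jointly_continuous (fun t s => G (set_first t (phi (cpt t 0) s)) (psi (cpt t 0) s)).
Proof.
  intros HG Hphi Hpsi Hrange t s eps Hs Heps.
  pose proof (cpt_first_in_unit t) as Ht0.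
  destruct (HG (set_first t (phi (cpt t 0) s)) (psi (cpt t 0) s) eps (Hrange _ _ Ht0 Hs) Heps)
    as [del [Hdel HG']].
  destruct (Hphi del Hdel) as [u1 [Hu1 Hphi']].
  destruct (Hpsi del Hdel) as [u2 [Hu2 Hpsi']].
  exists (Rmin del (Rmin u1 u2)); split; [repeat apply Rmin_pos; assumption|].
  intros t' s' Hs' Hclose Hds.
  pose proof (cpt_first_in_unit t') as Ht0'.
  pose proof (Hclose 0%nat n_pos) as Hd0.
  pose proof (Rmin_l del (Rmin u1 u2)); pose proof (Rmin_r del (Rmin u1 u2)).
  pose proof (Rmin_l u1 u2); pose proof (Rmin_r u1 u2).
  apply HG'.
  - apply Hrange; assumption.
  - intros [|k] Hk; rewrite ?cpt_set_first0.
    + eapply Rle_lt_trans; [apply clamp01_lipschitz|]. apply Hphi'; auto; lra.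
    + rewrite !cpt_set_first_off by discriminate. specialize (Hclose (S k) Hk); lra.
  - apply Hpsi'; auto; lra.
Qed.

Lemma jointly_continuous_respace G phi :
  jointly_continuous G -> square_unif_continuous phi ->
  jointly_continuous (fun t s => G (set_first t (phi (cpt t 0) s)) s).
Proof.
  intros HG Hphi. apply (jointly_continuous_reparam G phi (fun _ s => s)); auto.
  apply bilinear_unif_continuous; intros; cbv beta; ring.
Qed.

Lemma jointly_continuous_retime G psi :
  jointly_continuous G -> square_unif_continuous (fun _ s => psi s) ->
  (forall s, 0 <= s <= 1 -> 0 <= psi s <= 1) ->
  jointly_continuous (fun t s => G t (psi s)).
Proof.
  intros HG Hpsi Hrange.
  replace (fun t s => G t (psi s)) with (fun t s => G (set_first t (cpt t 0)) (psi s))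
    by (extensionality t; extensionality s; rewrite set_first_cpt; reflexivity).
  apply (jointly_continuous_reparam G (fun x _ => x) (fun _ s => psi s)); auto.
  apply bilinear_unif_continuous; intros; cbv beta; ring.
Qed.

Lemma jointly_continuous_paste h c F1 F2 :
  square_unif_continuous h -> jointly_continuous F1 -> jointly_continuous F2 ->
  (forall t s, 0 <= s <= 1 -> h (cpt t 0) s = c -> F1 t s = F2 t s) ->
  jointly_continuous (fun t s => if Rle_dec (h (cpt t 0) s) c then F1 t s else F2 t s).
Proof.
  intros Hh H1 H2 Hseam t s eps Hs Heps.
  destruct (H1 t s eps Hs Heps) as [d1 [Hd1 P1]].
  destruct (H2 t s eps Hs Heps) as [d2 [Hd2 P2]].
  destruct (unif_continuous_sign_stable h c _ _ Hh (cpt_first_in_unit t) Hs) as [d3 [Hd3 Hsign]].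
  set (u := Rmin d1 (Rmin d2 d3)).
  assert (Hu1 : u <= d1) by apply Rmin_l.
  assert (Hu2 : u <= d2) by (eapply Rle_trans; [apply Rmin_r | apply Rmin_l]).
  assert (Hu3 : u <= d3) by (eapply Rle_trans; [apply Rmin_r | apply Rmin_r]).
  exists u; split; [repeat apply Rmin_pos; assumption|].
  intros t' s' Hs' Hclose Hds.
  assert (Hclose' : forall del, u <= del ->
            forall i, (i < n)%nat -> Rabs (cpt t' i - cpt t i) < del)
    by (intros del Hdel i Hi; specialize (Hclose i Hi); lra).
  destruct (Hsign (cpt t' 0) s' (cpt_first_in_unit t') Hs') as [Hneg Hpos];
    [apply (Hclose' d3 Hu3 0%nat n_pos) | lra |].
  destruct (Rle_dec (h (cpt t' 0) s') c), (Rle_dec (h (cpt t 0) s) c).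
  - apply P1; auto; lra.
  - lra.
  - destruct (Req_dec (h (cpt t 0) s) c) as [Hon | Hoff]; [|lra].
    rewrite (Hseam t s Hs Hon). apply P2; auto; lra.
  - apply P2; auto; lra.
Qed.

Definition concat (theta : R) (f g : cube n -> X) (t : cube n) : X :=
  if Rle_dec (cpt t 0) theta then f (set_first t (cpt t 0 / theta))
  else g (set_first t ((cpt t 0 - theta) / (1 - theta))).

Definition reverse (f : cube n -> X) (t : cube n) : X := f (set_first t (1 - cpt t 0)).

Definition hconcat theta (F G : cube n -> R -> X) (t : cube n) (s : R) : X :=
  concat theta (fun t' => F t' s) (fun t' => G t' s) t.

Definition hreverse (F : cube n -> R -> X) (t : cube n) (s : R) : X :=
  reverse (fun t' => F t' s) t.

Lemma hconcat_continuous theta F G : 0 < theta < 1 ->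
  jointly_continuous F -> jointly_continuous G ->
  (forall t s, 0 <= s <= 1 -> F (set_first t 1) s = G (set_first t 0) s) ->
  jointly_continuous (hconcat theta F G).
Proof.
  intros Htheta HF HG Hseam. unfold hconcat, concat.
  apply (jointly_continuous_paste (fun x _ => x) theta
           (fun t s => F (set_first t (cpt t 0 / theta)) s)
           (fun t s => G (set_first t ((cpt t 0 - theta) / (1 - theta))) s)).
  - apply bilinear_unif_continuous; intros; cbv beta; ring.
  - apply (jointly_continuous_respace F (fun x _ => x / theta)); [exact HF|].
    apply bilinear_unif_continuous; intros; cbv beta; field; lra.
  - apply (jointly_continuous_respace G (fun x _ => (x - theta) / (1 - theta))); [exact HG|].
    apply bilinear_unif_continuous; intros; cbv beta; field; lra.
  - intros t s Hs Ht; cbv beta in Ht; rewrite Ht.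
    replace (theta / theta) with 1 by (field; lra).
    replace ((theta - theta) / (1 - theta)) with 0 by (field; lra).
    apply Hseam, Hs.
Qed.

Lemma hconcat_fixes_boundary theta F G : 0 < theta < 1 ->
  fixes_side_faces F -> fixes_side_faces G ->
  (forall t s, 0 <= s <= 1 -> F (set_first t 0) s = x0) ->
  (forall t s, 0 <= s <= 1 -> G (set_first t 1) s = x0) ->
  fixes_boundary (hconcat theta F G).
Proof.
  intros Htheta HF HG HF0 HG1 t s Hs Ht. unfold hconcat, concat.
  destruct (on_boundary_cases t Ht) as [E | [E | Hside]]; rewrite ?E.
  - destruct Rle_dec; [|lra]. replace (0 / theta) with 0 by (field; lra). apply HF0, Hs.
  - destruct Rle_dec; [lra|]. replace ((1 - theta) / (1 - theta)) with 1 by (field; lra).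
    apply HG1, Hs.
  - destruct Rle_dec; [apply HF | apply HG]; auto; apply side_face_set_first, Hside.
Qed.

Lemma hreverse_continuous F : jointly_continuous F -> jointly_continuous (hreverse F).
Proof.
  intros HF. apply (jointly_continuous_respace F (fun x _ => 1 - x)); [exact HF|].
  apply bilinear_unif_continuous; intros; cbv beta; ring.
Qed.

Lemma hreverse_fixes_boundary F : fixes_boundary F -> fixes_boundary (hreverse F).
Proof.
  intros HF t s Hs Ht. unfold hreverse, reverse. apply HF; [exact Hs|].
  destruct (on_boundary_cases t Ht) as [E | [E | Hside]]; rewrite ?E.
  - rewrite Rminus_0_r; apply on_boundary_set_first1.
  - rewrite Rminus_diag; apply on_boundary_set_first0.
  - apply side_face_on_boundary, side_face_set_first, Hside.
Qed.

Lemma reverse_loop f : is_loop d n x0 f -> is_loop d n x0 (reverse f).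
Proof.
  intros Hf; destruct (loop_const_htpy f Hf) as [Cf Bf].
  apply (loop_of_htpy (hreverse (const_htpy f)) 0); [| | lra].
  - apply hreverse_continuous, Cf.
  - apply hreverse_fixes_boundary, Bf.
Qed.

Lemma reverse_involutive f : reverse (reverse f) = f.
Proof.
  extensionality t; unfold reverse.
  pose proof (cpt_first_in_unit t).
  rewrite set_first_set_first, cpt_set_first0, clamp01_id by lra.
  replace (1 - (1 - cpt t 0)) with (cpt t 0) by ring. rewrite set_first_cpt; reflexivity.
Qed.

Lemma concat_assoc_thirds f g h :
  concat (1/3) f (concat (1/2) g h) = concat (2/3) (concat (1/2) f g) h.
Proof.
  extensionality t; pose proof (cpt_first_in_unit t) as Ht0; unfold concat.
  rewrite !set_first_set_first, !cpt_set_first0.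
  destruct (Rle_dec (cpt t 0) (1/3)), (Rle_dec (cpt t 0) (2/3)); try lra.
  - rewrite (clamp01_id (cpt t 0 / (2/3))) by lra.
    destruct Rle_dec; [|lra]. do 2 f_equal; field.
  - rewrite (clamp01_id ((cpt t 0 - 1/3) / (1 - 1/3))) by lra.
    rewrite (clamp01_id (cpt t 0 / (2/3))) by lra.
    do 2 (destruct Rle_dec; try lra). do 2 f_equal; field.
  - rewrite (clamp01_id ((cpt t 0 - 1/3) / (1 - 1/3))) by lra.
    destruct Rle_dec; [lra|]. do 2 f_equal; field.
Qed.

Lemma homotopic_fun_refl f : is_loop d n x0 f -> homotopic_fun f f.
Proof.
  intros Hf; destruct (loop_const_htpy f Hf) as [Cf Bf].
  exists (const_htpy f); repeat split; auto.
Qed.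

Lemma homotopic_fun_sym f g : homotopic_fun f g -> homotopic_fun g f.
Proof.
  intros [H [HC [H0 [H1 HB]]]]. exists (fun t s => H t (1 - s)); repeat split.
  - apply (jointly_continuous_retime H (fun s => 1 - s)); [exact HC | | intros; lra].
    apply bilinear_unif_continuous; intros; cbv beta; ring.
  - intros t; rewrite Rminus_0_r; apply H1.
  - intros t; rewrite Rminus_diag; apply H0.
  - intros t s Hs Ht; apply HB; [lra | exact Ht].
Qed.

Lemma homotopic_fun_trans f g h : homotopic_fun f g -> homotopic_fun g h -> homotopic_fun f h.
Proof.
  intros [H1 [C1 [H10 [H11 B1]]]] [H2 [C2 [H20 [H21 B2]]]].
  exists (fun t s => if Rle_dec s (1/2) then H1 t (clamp01 (2 * s))
                     else H2 t (clamp01 (2 * s - 1))).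
  repeat split.
  - apply (jointly_continuous_paste (fun _ s => s) (1/2)
             (fun t s => H1 t (clamp01 (2 * s))) (fun t s => H2 t (clamp01 (2 * s - 1)))).
    + apply bilinear_unif_continuous; intros; cbv beta; ring.
    + apply (jointly_continuous_retime H1 (fun s => clamp01 (2 * s)));
        [exact C1 | | intros; apply clamp01_in_unit].
      apply (clamp01_unif_continuous (fun _ s => 2 * s)), bilinear_unif_continuous.
      intros; cbv beta; ring.
    + apply (jointly_continuous_retime H2 (fun s => clamp01 (2 * s - 1)));
        [exact C2 | | intros; apply clamp01_in_unit].
      apply (clamp01_unif_continuous (fun _ s => 2 * s - 1)), bilinear_unif_continuous.
      intros; cbv beta; ring.
    + intros t s _ Hs; cbv beta in Hs; subst s.
      rewrite clamp01_ge1, clamp01_le0 by lra. rewrite H11, H20; reflexivity.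
  - intros t; destruct Rle_dec; [|lra]. rewrite clamp01_le0 by lra; apply H10.
  - intros t; destruct Rle_dec; [lra|]. rewrite clamp01_ge1 by lra; apply H21.
  - intros t s Hs Ht; destruct Rle_dec; [apply B1 | apply B2]; auto using clamp01_in_unit.
Qed.

Lemma homotopic_fun_ext f f' g g' : (forall t, f t = f' t) -> (forall t, g t = g' t) ->
  homotopic_fun f g -> homotopic_fun f' g'.
Proof.
  intros Ef Eg [H [HC [H0 [H1 HB]]]]; exists H; repeat split; auto.
  - intros t; rewrite H0; apply Ef.
  - intros t; rewrite H1; apply Eg.
Qed.

Lemma homotopic_fun_loop_r f g : homotopic_fun f g -> is_loop d n x0 g.
Proof.
  intros [H [HC [_ [H1 HB]]]].
  replace g with (fun t => H t 1) by (extensionality t; apply H1).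
  apply loop_of_htpy; auto; lra.
Qed.

Lemma homotopic_fun_concat theta f f' g g' : 0 < theta < 1 ->
  homotopic_fun f f' -> homotopic_fun g g' ->
  homotopic_fun (concat theta f g) (concat theta f' g').
Proof.
  intros Htheta [H1 [C1 [H10 [H11 B1]]]] [H2 [C2 [H20 [H21 B2]]]].
  exists (hconcat theta H1 H2); repeat split.
  - apply hconcat_continuous; auto. intros t s Hs.
    rewrite B1, B2; auto using on_boundary_set_first0, on_boundary_set_first1.
  - intros t; unfold hconcat, concat; destruct Rle_dec; auto.
  - intros t; unfold hconcat, concat; destruct Rle_dec; auto.
  - apply hconcat_fixes_boundary; auto using fixes_boundary_side_faces;
      intros; [apply B1 | apply B2]; auto using on_boundary_set_first0, on_boundary_set_first1.
Qed.

Lemma homotopic_fun_reverse f f' :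
  homotopic_fun f f' -> homotopic_fun (reverse f) (reverse f').
Proof.
  intros [H [HC [H0 [H1 HB]]]]. exists (hreverse H); repeat split.
  - apply hreverse_continuous, HC.
  - intros t; apply H0.
  - intros t; apply H1.
  - apply hreverse_fixes_boundary, HB.
Qed.

Lemma homotopic_fun_reparam f phi : is_loop d n x0 f -> square_unif_continuous phi ->
  (forall s, 0 <= s <= 1 -> phi 0 s <= 0) -> (forall s, 0 <= s <= 1 -> 1 <= phi 1 s) ->
  homotopic_fun (fun t => f (set_first t (phi (cpt t 0) 0)))
                (fun t => f (set_first t (phi (cpt t 0) 1))).
Proof.
  intros Hf Hphi Hphi0 Hphi1.
  exists (fun t s => const_htpy f (set_first t (phi (cpt t 0) s)) s); repeat split.
  - apply jointly_continuous_respace; [apply (loop_const_htpy f Hf) | exact Hphi].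
  - intros t s Hs Ht; unfold const_htpy.
    destruct (on_boundary_cases t Ht) as [E | [E | Hside]]; rewrite ?E.
    + apply loop_set_first_le0; auto.
    + apply loop_set_first_ge1; auto.
    + apply loop_side_face; auto.
Qed.

Lemma concat_const_r theta f : 0 < theta < 1 -> is_loop d n x0 f ->
  homotopic_fun (concat theta f const_loop) f.
Proof.
  intros Htheta Hf. set (phi x s := (1 - s) * (x / theta) + s * x).
  apply (homotopic_fun_ext (fun t => f (set_first t (phi (cpt t 0) 0))) _
                           (fun t => f (set_first t (phi (cpt t 0) 1)))).
  - intros t; unfold concat, const_loop, phi; destruct Rle_dec.
    + do 2 f_equal; ring.
    + apply loop_set_first_ge1; auto.
      pose proof (one_le_div (cpt t 0) theta); lra.
  - intros t; unfold phi.
    replace ((1 - 1) * (cpt t 0 / theta) + 1 * cpt t 0) with (cpt t 0) by ring.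
    rewrite set_first_cpt; reflexivity.
  - apply homotopic_fun_reparam; auto; unfold phi.
    + apply bilinear_unif_continuous; intros; field; lra.
    + intros s Hs; unfold Rdiv; rewrite Rmult_0_l; lra.
    + intros s Hs. pose proof (one_le_div 1 theta).
      assert ((1 - s) * 1 <= (1 - s) * (1 / theta)) by (apply Rmult_le_compat_l; lra). lra.
Qed.

Lemma concat_const_l theta g : 0 < theta < 1 -> is_loop d n x0 g ->
  homotopic_fun (concat theta const_loop g) g.
Proof.
  intros Htheta Hg. set (phi x s := (1 - s) * ((x - theta) / (1 - theta)) + s * x).
  apply (homotopic_fun_ext (fun t => g (set_first t (phi (cpt t 0) 0))) _
                           (fun t => g (set_first t (phi (cpt t 0) 1)))).
  - intros t; unfold concat, const_loop, phi; destruct Rle_dec.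
    + apply loop_set_first_le0; auto.
      pose proof (div_nonpos (cpt t 0 - theta) (1 - theta)); lra.
    + do 2 f_equal; ring.
  - intros t; unfold phi.
    replace ((1 - 1) * ((cpt t 0 - theta) / (1 - theta)) + 1 * cpt t 0) with (cpt t 0) by ring.
    rewrite set_first_cpt; reflexivity.
  - apply homotopic_fun_reparam; auto; unfold phi.
    + apply bilinear_unif_continuous; intros; field; lra.
    + intros s Hs. pose proof (div_nonpos (0 - theta) (1 - theta)).
      assert (0 <= (1 - s) * - ((0 - theta) / (1 - theta))) by (apply Rmult_le_pos; lra). lra.
    + intros s Hs. replace ((1 - theta) / (1 - theta)) with 1 by (field; lra). lra.
Qed.

Lemma concat_reverse_l theta b : 0 < theta < 1 -> is_loop d n x0 b ->
  homotopic_fun (concat theta (reverse b) b) const_loop.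
Proof.
  intros Htheta Hb. destruct (loop_const_htpy b Hb) as [Cb _].
  (* [S _ s] runs through [b] restricted to [s, 1], and [R _ s] is its reverse. *)
  set (S t s := b (set_first t (s + (1 - s) * cpt t 0))).
  set (R t s := b (set_first t (s + (1 - s) * (1 - cpt t 0)))).
  apply (homotopic_fun_ext (fun t => hconcat theta R S t 0) _ (fun t => hconcat theta R S t 1)).
  - intros t; unfold hconcat, concat, reverse, R, S; destruct Rle_dec.
    + do 2 f_equal; ring.
    + replace (0 + (1 - 0) * _) with (cpt (set_first t ((cpt t 0 - theta) / (1 - theta))) 0)
        by ring.
      rewrite set_first_cpt; reflexivity.
  - intros t; unfold hconcat, concat, const_loop, R, S.
    destruct Rle_dec; apply loop_set_first_ge1; auto; lra.
  - exists (hconcat theta R S); repeat split.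
    + apply hconcat_continuous; auto.
      * apply (jointly_continuous_respace (const_htpy b) (fun x s => s + (1 - s) * (1 - x)) Cb).
        apply bilinear_unif_continuous; intros; cbv beta; ring.
      * apply (jointly_continuous_respace (const_htpy b) (fun x s => s + (1 - s) * x) Cb).
        apply bilinear_unif_continuous; intros; cbv beta; ring.
      * intros t s _; unfold R, S; rewrite !set_first_set_first, !cpt_set_first0.
        rewrite clamp01_ge1, clamp01_le0 by lra. do 2 f_equal; ring.
    + apply hconcat_fixes_boundary; auto; unfold R, S.
      * intros t s _ Hside; apply loop_side_face; auto.
      * intros t s _ Hside; apply loop_side_face; auto.
      * intros t s _; rewrite set_first_set_first, cpt_set_first0, clamp01_le0 by lra.
        apply loop_set_first_ge1; auto; lra.
      * intros t s _; rewrite set_first_set_first, cpt_set_first0, clamp01_ge1 by lra.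
        apply loop_set_first_ge1; auto; lra.
Qed.

Lemma concat_reverse_r theta b : 0 < theta < 1 -> is_loop d n x0 b ->
  homotopic_fun (concat theta b (reverse b)) const_loop.
Proof.
  intros Htheta Hb. rewrite <- (reverse_involutive b) at 1.
  apply concat_reverse_l, reverse_loop; assumption.
Qed.

Lemma concat3_cancel_r a b b' : is_loop d n x0 a -> is_loop d n x0 b -> homotopic_fun b' b ->
  homotopic_fun (concat (1/3) a (concat (1/2) (reverse b) b')) a.
Proof.
  intros Ha Hb Hb'.
  apply (homotopic_fun_trans _ (concat (1/3) a (concat (1/2) (reverse b) b))).
  { apply homotopic_fun_concat; [lra | apply homotopic_fun_refl, Ha|].
    apply homotopic_fun_concat; [lra | apply homotopic_fun_refl, reverse_loop, Hb | exact Hb']. }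
  apply (homotopic_fun_trans _ (concat (1/3) a const_loop)).
  { apply homotopic_fun_concat; [lra | apply homotopic_fun_refl, Ha|].
    apply concat_reverse_l; [lra | exact Hb]. }
  apply concat_const_r; [lra | exact Ha].
Qed.

Lemma concat3_cancel_l b c : is_loop d n x0 b -> is_loop d n x0 c ->
  homotopic_fun (concat (1/3) b (concat (1/2) (reverse b) c)) c.
Proof.
  intros Hb Hc. rewrite concat_assoc_thirds.
  apply (homotopic_fun_trans _ (concat (2/3) const_loop c)).
  { apply homotopic_fun_concat; [lra | | apply homotopic_fun_refl, Hc].
    apply concat_reverse_r; [lra | exact Hb]. }
  apply concat_const_l; [lra | exact Hc].
Qed.

Lemma concat_dist_le theta f g f' g' r :
  (forall t, d (f t) (f' t) <= r) -> (forall t, d (g t) (g' t) <= r) ->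
  forall t, d (concat theta f g t) (concat theta f' g' t) <= r.
Proof. intros Hf Hg t; unfold concat; destruct Rle_dec; auto. Qed.

Lemma concat_of_is_concat f g h : is_concat f g h -> forall t, h t = concat (1/2) f g t.
Proof.
  intros Hcat t; pose proof (cpt_first_in_unit t); unfold concat.
  destruct Rle_dec.
  - apply (proj1 (Hcat t _ (cpt_set_first_off t _))); [lra|].
    rewrite cpt_set_first_in_unit by lra; field.
  - apply (proj2 (Hcat t _ (cpt_set_first_off t _))); [lra|].
    rewrite cpt_set_first_in_unit by lra; field.
Qed.

Lemma reverse_of_is_rev f h : is_rev f h -> forall t, h t = reverse f t.
Proof.
  intros Hrev t; pose proof (cpt_first_in_unit t).
  apply (Hrev t _ (cpt_set_first_off t _)), cpt_set_first_in_unit; lra.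
Qed.

Hypothesis dist_self : forall x, d x x = 0.
Hypothesis dist_nonneg : forall x y, 0 <= d x y.

Definition represents (A : pin d n x0) (f : cube n -> X) : Prop :=
  exists a, pmem A a /\ homotopic_fun (oval a) f.

Lemma oval_loop (a : Omega d n x0) : is_loop d n x0 (oval a).
Proof. exact (proj2_sig a). Qed.

Lemma pmem_homotopic (A : pin d n x0) a b : pmem A a -> pmem A b -> homotopic_fun (oval a) (oval b).
Proof.
  destruct A as [P [a0 ->]]; unfold pmem; simpl; intros Ha Hb.
  exact (homotopic_fun_trans _ _ _ (homotopic_fun_sym _ _ Ha) Hb).
Qed.

Lemma pmem_homotopic_closed (A : pin d n x0) a b :
  pmem A a -> homotopic_fun (oval a) (oval b) -> pmem A b.
Proof.
  destruct A as [P [a0 ->]]; unfold pmem; simpl; intros Ha Hab.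
  exact (homotopic_fun_trans _ _ _ Ha Hab).
Qed.

Lemma represents_pmem (A : pin d n x0) a : pmem A a -> represents A (oval a).
Proof. intros Ha; exists a; split; [exact Ha | apply homotopic_fun_refl, oval_loop]. Qed.

Lemma represents_homotopic (A : pin d n x0) f g :
  represents A f -> homotopic_fun f g -> represents A g.
Proof.
  intros [a [Ha Haf]] Hfg; exists a; split; [exact Ha | eapply homotopic_fun_trans; eauto].
Qed.

Lemma pmem_piproj (a : Omega d n x0) : pmem (piproj d n x0 a) a.
Proof. apply homotopic_fun_refl, oval_loop. Qed.

Lemma pin_inhabited (A : pin d n x0) : exists a, pmem A a.
Proof. destruct A as [P [a0 ->]]; exists a0; apply pmem_piproj. Qed.

Lemma mu_le (a b : Omega d n x0) M :
  (forall t, d (oval a t) (oval b t) <= M) -> exists r, mu a b = Finite r /\ r <= M.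
Proof.
  intros HM. unfold mu.
  destruct (Lub_Rbar_correct (fun r => exists t, r = d (oval a t) (oval b t))) as [ub lub].
  pose proof (ub _ (ex_intro _ cube_origin eq_refl)) as Hlow.
  assert (Hup : Rbar_le (Lub_Rbar (fun r => exists t, r = d (oval a t) (oval b t))) (Finite M))
    by (apply lub; intros x [t ->]; apply HM).
  destruct (Lub_Rbar _) as [r | |]; simpl in Hlow, Hup; try contradiction.
  exists r; split; [reflexivity | exact Hup].
Qed.

Lemma mu_ge (a b : Omega d n x0) r :
  mu a b = Finite r -> forall t, d (oval a t) (oval b t) <= r.
Proof.
  intros E t. unfold mu in E.
  destruct (Lub_Rbar_correct (fun r => exists t, r = d (oval a t) (oval b t))) as [ub _].
  pose proof (ub _ (ex_intro _ t eq_refl)) as H. rewrite E in H. exact H.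
Qed.

Lemma mu_not_m_infty (a b : Omega d n x0) : mu a b <> m_infty.
Proof.
  intros E. unfold mu in E.
  destruct (Lub_Rbar_correct (fun r => exists t, r = d (oval a t) (oval b t))) as [ub _].
  pose proof (ub _ (ex_intro _ cube_origin eq_refl)) as H. rewrite E in H. exact H.
Qed.

Lemma rho_lt_of_dist_le (A B : pin d n x0) f g r eps :
  represents A f -> represents B g -> (forall t, d (f t) (g t) <= r) -> r < eps ->
  Rbar_lt (rho A B) (Finite eps).
Proof.
  intros [a [Ha Haf]] [b [Hb Hbg]] Hr Heps.
  set (af := exist _ f (homotopic_fun_loop_r _ _ Haf) : Omega d n x0).
  set (bg := exist _ g (homotopic_fun_loop_r _ _ Hbg) : Omega d n x0).
  destruct (mu_le af bg r Hr) as [r' [Hm Hr']].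
  unfold rho.
  destruct (Glb_Rbar_correct (fun r => exists a b, pmem A a /\ pmem B b /\ mu a b = Finite r))
    as [lb _].
  apply (Rbar_le_lt_trans _ (Finite r')); [apply lb | simpl; lra].
  exists af, bg; split; [|split; [|exact Hm]].
  - apply (pmem_homotopic_closed A a); assumption.
  - apply (pmem_homotopic_closed B b); assumption.
Qed.

Lemma rho_lt_dist_le (A B : pin d n x0) eps : Rbar_lt (rho A B) (Finite eps) ->
  exists a b r, pmem A a /\ pmem B b /\ (forall t, d (oval a t) (oval b t) <= r) /\ r < eps.
Proof.
  intros H. apply NNPP; intros Hnone. unfold rho in H.
  destruct (Glb_Rbar_correct (fun r => exists a b, pmem A a /\ pmem B b /\ mu a b = Finite r))
    as [_ glb].
  apply (Rbar_lt_not_le _ _ H), glb. intros x [a [b [Ha [Hb Hm]]]]; simpl.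
  apply Rnot_lt_le; intros Hx. apply Hnone.
  exists a, b, x; repeat split; auto using mu_ge.
Qed.

Lemma rho_piproj_lt (a b : Omega d n x0) eps : Rbar_lt (mu a b) (Finite eps) ->
  Rbar_lt (rho (piproj d n x0 a) (piproj d n x0 b)) (Finite eps).
Proof.
  intros Hab. pose proof (mu_not_m_infty a b).
  destruct (mu a b) as [r | |] eqn:E; simpl in Hab; try contradiction.
  apply (rho_lt_of_dist_le _ _ (oval a) (oval b) r); auto using represents_pmem, pmem_piproj, mu_ge.
Qed.

Lemma rho_ultrametric (A B C : pin d n x0) eps :
  Rbar_lt (rho A B) (Finite eps) -> Rbar_lt (rho B C) (Finite eps) ->
  Rbar_lt (rho A C) (Finite eps).
Proof.
  intros HAB HBC.
  destruct (rho_lt_dist_le _ _ _ HAB) as [a [b [r1 [Ha [Hb [Hab Hr1]]]]]].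
  destruct (rho_lt_dist_le _ _ _ HBC) as [b' [c [r2 [Hb' [Hc [Hbc Hr2]]]]]].
  apply (rho_lt_of_dist_le A C
           (concat (1/3) (oval a) (concat (1/2) (reverse (oval b)) (oval b')))
           (concat (1/3) (oval b) (concat (1/2) (reverse (oval b)) (oval c))) (Rmax r1 r2)).
  - apply (represents_homotopic A (oval a)); [apply represents_pmem, Ha|].
    apply homotopic_fun_sym, concat3_cancel_r; try apply oval_loop.
    apply (pmem_homotopic B); assumption.
  - apply (represents_homotopic C (oval c)); [apply represents_pmem, Hc|].
    apply homotopic_fun_sym, concat3_cancel_l; apply oval_loop.
  - apply concat_dist_le; [|apply concat_dist_le]; intros t.
    + eapply Rle_trans; [apply Hab | apply Rmax_l].
    + rewrite dist_self. eapply Rle_trans; [apply (dist_nonneg (oval a t) (oval b t)) |].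
      eapply Rle_trans; [apply Hab | apply Rmax_l].
    + eapply Rle_trans; [apply Hbc | apply Rmax_r].
  - apply Rmax_lub_lt; assumption.
Qed.

Definition rho_ball (A : pin d n x0) (e : R) : pin d n x0 -> Prop :=
  fun B => Rbar_lt (rho A B) (Finite e).

Lemma rho_ball_open A e : 0 < e -> rho_open d n x0 (rho_ball A e).
Proof.
  intros He B HB; exists e; split; [exact He|]. intros C HC; eapply rho_ultrametric; eauto.
Qed.

Lemma rho_ball_center A e : 0 < e -> rho_ball A e A.
Proof.
  intros He. destruct (pin_inhabited A) as [a Ha].
  apply (rho_lt_of_dist_le A A (oval a) (oval a) 0); auto using represents_pmem.
  intros t; rewrite dist_self; lra.
Qed.

Lemma rho_open_topology : is_topology (rho_open d n x0).
Proof.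
  split; [|split; [|split]].
  - intros A _; exists 1; split; [lra | auto].
  - intros A [].
  - intros U V HU HV A [HUA HVA].
    destruct (HU A HUA) as [e1 [He1 P1]], (HV A HVA) as [e2 [He2 P2]].
    exists (Rmin e1 e2); split; [apply Rmin_pos; assumption|]. intros B HB; split.
    + apply P1. eapply Rbar_lt_le_trans; [exact HB | apply Rmin_l].
    + apply P2. eapply Rbar_lt_le_trans; [exact HB | apply Rmin_r].
  - intros S HS A [U [HSU HUA]]. destruct (HS U HSU A HUA) as [e [He P]].
    exists e; split; [exact He|]. intros B HB; exists U; split; auto.
Qed.

Lemma represents_pin_mul (A B C : pin d n x0) a b : pin_mul A B C -> pmem A a -> pmem B b ->
  represents C (concat (1/2) (oval a) (oval b)).
Proof.
  intros [a0 [b0 [c0 [Ha0 [Hb0 [Hc0 Hcat]]]]]] Ha Hb.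
  apply (represents_homotopic C (concat (1/2) (oval a0) (oval b0))).
  - exists c0; split; [exact Hc0|].
    apply (homotopic_fun_ext (oval c0) _ (oval c0));
      [reflexivity | apply concat_of_is_concat, Hcat |].
    apply homotopic_fun_refl, oval_loop.
  - apply homotopic_fun_concat; [lra | apply (pmem_homotopic A) | apply (pmem_homotopic B)];
      assumption.
Qed.

Lemma represents_pin_inv (A C : pin d n x0) a : pin_inv A C -> pmem A a ->
  represents C (reverse (oval a)).
Proof.
  intros [a0 [c0 [Ha0 [Hc0 Hrev]]]] Ha.
  apply (represents_homotopic C (reverse (oval a0))).
  - exists c0; split; [exact Hc0|].
    apply (homotopic_fun_ext (oval c0) _ (oval c0));
      [reflexivity | apply reverse_of_is_rev, Hrev |].
    apply homotopic_fun_refl, oval_loop.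
  - apply homotopic_fun_reverse, (pmem_homotopic A); assumption.
Qed.

Lemma rho_lt_pin_mul (A B C A' B' C' : pin d n x0) e :
  pin_mul A B C -> pin_mul A' B' C' ->
  rho_ball A e A' -> rho_ball B e B' -> rho_ball C e C'.
Proof.
  intros HC HC' HA HB.
  destruct (rho_lt_dist_le _ _ _ HA) as [a [a' [r1 [Ha [Ha' [Haa Hr1]]]]]].
  destruct (rho_lt_dist_le _ _ _ HB) as [b [b' [r2 [Hb [Hb' [Hbb Hr2]]]]]].
  apply (rho_lt_of_dist_le C C' (concat (1/2) (oval a) (oval b))
           (concat (1/2) (oval a') (oval b')) (Rmax r1 r2));
    [apply (represents_pin_mul A B); assumption | apply (represents_pin_mul A' B'); assumption | |
     apply Rmax_lub_lt; assumption].
  apply concat_dist_le; intros t.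
  - eapply Rle_trans; [apply Haa | apply Rmax_l].
  - eapply Rle_trans; [apply Hbb | apply Rmax_r].
Qed.

Lemma rho_lt_pin_inv (A C A' C' : pin d n x0) e :
  pin_inv A C -> pin_inv A' C' -> rho_ball A e A' -> rho_ball C e C'.
Proof.
  intros HC HC' HA.
  destruct (rho_lt_dist_le _ _ _ HA) as [a [a' [r [Ha [Ha' [Haa Hr]]]]]].
  apply (rho_lt_of_dist_le C C' (reverse (oval a)) (reverse (oval a')) r);
    [apply (represents_pin_inv A); assumption | apply (represents_pin_inv A'); assumption | |
     exact Hr].
  intros t; apply Haa.
Qed.

Lemma rho_open_group_topology : group_topology d n x0 (rho_open d n x0).
Proof.
  split; [apply rho_open_topology | split].
  - intros A B C HC W HW HWC. destruct (HW C HWC) as [e [He PW]].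
    exists (rho_ball A e), (rho_ball B e).
    repeat split; auto using rho_ball_open, rho_ball_center.
    intros A' B' C' HA' HB' HC'. apply PW, (rho_lt_pin_mul A B C A' B'); assumption.
  - intros A C HC W HW HWC. destruct (HW C HWC) as [e [He PW]].
    exists (rho_ball A e). repeat split; auto using rho_ball_open, rho_ball_center.
    intros A' C' HA' HC'. apply PW, (rho_lt_pin_inv A C A'); assumption.
Qed.

Lemma piproj_continuous (U : pin d n x0 -> Prop) :
  rho_open d n x0 U -> Omega_open d n x0 (fun a => U (piproj d n x0 a)).
Proof.
  intros HU a HUa. destruct (HU _ HUa) as [e [He P]].
  exists e; split; [exact He|]. intros b Hab; apply P, rho_piproj_lt, Hab.
Qed.

End Loops.

Theorem proposition4p13 (X : Type) (d : X -> X -> R) (x0 : X) (n : nat) :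
  is_metric d -> path_connected d -> (1 <= n)%nat ->
  (forall U : pin d n x0 -> Prop, rho_open d n x0 U ->
     Omega_open d n x0 (fun a => U (piproj d n x0 a))) /\
  (forall U : pin d n x0 -> Prop, rho_open d n x0 U -> quotient_open d n x0 U) /\
  (forall U : pin d n x0 -> Prop, rho_open d n x0 U -> tau_open d n x0 U).
Proof.
  intros [dist_nonneg [dist_zero _]] _ n_pos.
  assert (dist_self : forall x, d x x = 0) by (intros x; apply dist_zero; reflexivity).
  pose proof (piproj_continuous n n_pos X d x0) as Hcont.
  split; [exact Hcont | split; [exact Hcont |]].
  intros U HU. apply gen_base. exists (rho_open d n x0).
  split; [exact (rho_open_group_topology n n_pos X d x0 dist_self dist_nonneg)|].
  split; [exact Hcont | exact HU].
Qed.
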